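(* The operadic partition poset $\Pi_{\mathcal{P}erm}(n)$ associated to the set operad $\mathcal{P}erm$ is isomorphic, for every $n\ge1$, to the poset $\Pi_P(n)$ of pointed partitions of $[n]$, via the identification sending the class of $e^m_i\times(x_1,\dots,x_m)$ in $\mathcal{P}erm_m(I)$ to the block $\{x_1,\dots,x_m\}$ with $x_i$ pointed.
   Context: The set operad $\mathcal{P}erm$ has $\mathcal{P}erm_n=\{e^n_1,\dots,e^n_n\}$, right $\mathbb{S}_n$-action $e^n_k\cdot\sigma=e^n_{\sigma^{-1}(k)}$, and composition $\mu(e^n_k;e^{i_1}_{j_1},\dots,e^{i_n}_{j_n})=e^{i_1+\cdots+i_n}_{i_1+\cdots+i_{k-1}+j_k}$. For a set operad $P$ and an $m$-element set $I$, $P_m(I)$ is the set of pairs $(\nu,f)$ with $\nu\in P_m$, $f:[m]\to I$ bijective, modulo $(\nu,f)\sim(\nu\sigma,f\sigma^{-1})$ (the class of $(\nu,f)$ is written $\nu\times(f(1),\dots,f(m))$). For $C_r=[(\nu_r,f_r)]\in P(I_r)$ and $\nu\in P_t$, $\tilde\mu(\nu;C_1,\dots,C_t)$ is the class of $(\mu(\nu;\nu_1,\dots,\nu_t),f)$ with $f$ the concatenation of the $f_r$. A $P$-partition of $[n]$ is a set $\{B_j\in P(I_j)\}$ with $\{I_j\}$ a set partition of $[n]$; $\Pi_P(n)$ is ordered by $\{B_k\in P(I_k)\}\le\{C_l\in P(J_l)\}$ iff each $I_k$ is partitioned by some $J_{p_1},\dots,J_{p_t}$ with $B_k=\tilde\mu(\nu;C_{p_1},\dots,C_{p_t})$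 for some $\nu\in P_t$. A pointed partition of $[n]$ is a set partition of $[n]$ in which exactly one element of each block is emphasized (pointed). In $\Pi_P(n)$, $\lambda\le\mu$ iff $\mu$ refines $\lambda$ as a partition and the pointed elements of $\lambda$ are all pointed in $\mu$. *)

From mathcomp Require Import all_boot all_fingroup.
Set Implicit Arguments.
Unset Strict Implicit.
Unset Printing Implicit Defensive.

Local Open Scope group_scope.

Section PermOperad.
Variable n : nat.

(* A representative of an element of Perm_m(I) : a pair (nu, f) with
   nu = e^m_{k+1} encoded by k : 'I_m (0-based), and f : 'I_m -> 'I_n
   (a bijection onto its image I).  m ranges over 0..n. *)
Definition repfam (m : 'I_n.+1) : finType := ('I_m * {ffun 'I_m -> 'I_n})%type.
Definition rep : finType := {m : 'I_n.+1 & repfam m}.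

Definition rsize (r : rep) : nat := tag r.
Definition rop (r : rep) : nat := val (tagged r).1.
Definition rseq (r : rep) : seq 'I_n := [seq (tagged r).2 i | i <- enum 'I_(tag r)].
Definition rvalid (r : rep) : bool := uniq (rseq r).
Definition rsupp (r : rep) : {set 'I_n} := [set x in rseq r].

(* Right S_m-action on representatives: (nu, f) . s = (nu . s, f o s),
   with the Perm action e^m_k . s = e^m_{s^-1(k)}. *)
Definition ract (r : rep) (s : {perm 'I_(tag r)}) : rep :=
  @Tagged _ (tag r) repfam (s^-1 (tagged r).1, [ffun i => (tagged r).2 (s i)]).

Arguments ract : clear implicits.

Definition rclass (r : rep) : {set rep} :=
  [set r' | [exists s : {perm 'I_(tag r)}, r' == ract r s]].

Definition Pblock (C : {set rep}) : Prop := exists2 r, rvalid r & C = rclass r.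

Definition csupp (C : {set rep}) : {set 'I_n} := \bigcup_(r in C) rsupp r.

Definition PermPartition (X : {set {set rep}}) : Prop :=
  [/\ forall C, C \in X -> Pblock C,
      partition [set csupp C | C in X] [set: 'I_n] &
      {in X &, injective csupp}].

(* r is (a representative of) mu(e^t_{k+1}; r_1,...,r_t) with concatenated f:
   the operation is e^{i_1+..+i_t}_{i_1+..+i_k + j_{k+1}}. *)
Definition composite (k : nat) (rs : seq rep) (r : rep) : Prop :=
  k < size rs /\
  rseq r = flatten (map rseq rs) /\
  exists rk rest, drop k rs = rk :: rest /\
                  rop r = sumn (map rsize (take k rs)) + rop rk.

Definition is_tmu (k : nat) (cs : seq {set rep}) (B : {set rep}) : Prop :=
  exists rs : seq rep,
    [/\ size rs = size cs, all2 (fun (r : rep) (C : {set rep}) => r \in C) rs cs &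
        exists2 r, composite k rs r & B = rclass r].

Definition PermLe (X Y : {set {set rep}}) : Prop :=
  forall B, B \in X ->
    exists (cs : seq {set rep}) (k : nat),
      [/\ uniq cs, {subset cs <= Y},
          csupp B = \bigcup_(C <- cs) csupp C &
          is_tmu k cs B].

Definition pointed_partition (P : {set {set 'I_n} * 'I_n}) : Prop :=
  [/\ partition [set p.1 | p in P] [set: 'I_n],
      forall p, p \in P -> p.2 \in p.1 &
      {in P &, injective (fun p : {set 'I_n} * 'I_n => p.1)}].

Definition pointed_le (L M : {set {set 'I_n} * 'I_n}) : Prop :=
  (forall b, b \in M -> exists2 a, a \in L & b.1 \subset a.1) /\
  [set p.2 | p in L] \subset [set p.2 | p in M].

Definition pblock_of (r : rep) : {set 'I_n} * 'I_n :=
  (rsupp r, (tagged r).2 (tagged r).1).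

Definition phi (X : {set {set rep}}) : {set {set 'I_n} * 'I_n} :=
  [set pblock_of r | r in \bigcup_(C in X) C].

End PermOperad.

From Pilot Require Import Defs.
From mathcomp Require Import all_boot all_fingroup.
Set Implicit Arguments.
Unset Strict Implicit.
Unset Printing Implicit Defensive.

(* An element of Perm_m(I) is determined by its support I and its pointed
   element: two injective representatives with the same image and the same
   value f(k) differ by a permutation s, and e^m_k . s = e^m_{s^-1(k)} moves the
   index accordingly. So Perm-blocks are exactly the fibres [pclass (A, x)] of
   [pblock_of] over valid representatives, and [P |-> pclass @: P] inverts
   [phi]. For the order, mu(e^t_k; C_1, ..., C_t) is the block
   with support the union of the supports and with the pointed element of C_k;
   hence a block of X is such a composite of blocks of Y exactly when it is a
   union of blocks of Y and its pointed element is pointed in Y. *)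

Lemma codom_subset_perm (D : finType) (T : eqType) (f g : D -> T) :
  injective g -> {subset codom g <= codom f} -> exists s : {perm D}, g =1 f \o s.
Proof.
move=> g_inj g_f.
pose s i : D := iinv (g_f _ (codom_f g i)).
have fs i : f (s i) = g i by rewrite f_iinv.
have s_inj : injective s by move=> i j /(congr1 f); rewrite !fs => /g_inj.
by exists (perm s_inj) => i /=; rewrite permE fs.
Qed.

(* [ract] alone would resolve to the group action of fingroup. *)
Local Notation ract r s := (@Defs.ract _ r s).

Lemma all2_nth (S T : Type) (R : S -> T -> bool) (s : seq S) (t : seq T) x0 y0 k :
  all2 R s t -> k < size s -> R (nth x0 s k) (nth y0 t k).
Proof.
by elim: s t k => [|x s IH] [|y t] [|k] //= /andP [Rxy Rst] k_lt //; apply: IH.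
Qed.

Section PermPartition.
Variable n : nat.
Implicit Types (r : rep n) (C : {set rep n}) (X : {set {set rep n}}).
Implicit Types (p q : {set 'I_n} * 'I_n) (P Q : {set {set 'I_n} * 'I_n}).

Definition rpoint r : 'I_n := (tagged r).2 (tagged r).1.

Definition pointed_block p : bool := p.2 \in p.1.

Definition pclass p : {set rep n} := [set r | rvalid r && (pblock_of r == p)].

Lemma rseqE r : rseq r = codom (tagged r).2. Proof. by []. Qed.

Lemma rvalidP r : reflect (injective (tagged r).2) (rvalid r).
Proof. exact: injectiveP. Qed.

Lemma pblock_ofE r : pblock_of r = (rsupp r, rpoint r). Proof. by []. Qed.

Lemma nth_rseq r x0 : nth x0 (rseq r) (rop r) = rpoint r.
Proof.
by rewrite (nth_map (tagged r).1) ?nth_ord_enum // size_enum_ord ltn_ord.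
Qed.

Lemma pblock_of_pointed r : pointed_block (pblock_of r).
Proof. by rewrite /pointed_block /= inE rseqE codom_f. Qed.

Lemma card_rsupp r : rvalid r -> #|rsupp r| = tag r.
Proof. by move/rvalidP=> inj; rewrite cardsE rseqE card_codom ?card_ord. Qed.

Lemma ractE r s :
  ract r s = Tagged (@repfam n) ((s^-1)%g (tagged r).1, [ffun i => (tagged r).2 (s i)]).
Proof. by []. Qed.

Lemma rvalid_ract r s : rvalid r -> rvalid (ract r s).
Proof.
by move/rvalidP=> inj; apply/rvalidP => i j /=; rewrite !ffunE => /inj/perm_inj.
Qed.

Lemma pblock_of_ract r s : pblock_of (ract r s) = pblock_of r.
Proof.
rewrite !pblock_ofE /rpoint /= ffunE permKV; congr pair; apply/setP=> y.
rewrite !inE !rseqE; apply/codomP/codomP => [[i]|[i ->]]; rewrite ?ffunE.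
  by move=> ->; exists (s i).
by exists ((s^-1)%g i); rewrite ffunE permKV.
Qed.

Lemma ract_transitive r r' : rvalid r -> rvalid r' -> pblock_of r' = pblock_of r ->
  exists s, r' = ract r s.
Proof.
rewrite !pblock_ofE => vr vr' [E1 E2].
have tagE : tag r' = tag r by apply: val_inj; rewrite /= -card_rsupp // -card_rsupp // E1.
case: r r' tagE vr vr' E1 E2 => m [k f] [m' [k' f']] /= tagE; subst m'.
move=> /rvalidP /= f_inj /rvalidP /= f'_inj E1; rewrite /rpoint /= => E2.
have [s fs] : exists s : {perm 'I_m}, f' =1 f \o s.
  apply: codom_subset_perm => // y; move/setP: E1 => /(_ y).
  by rewrite !inE !rseqE /= => <-.
have k'E : k' = (s^-1)%g k.
  by apply: (@perm_inj _ s); rewrite permKV; apply: f_inj; rewrite -E2 fs.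
have f'E : f' = [ffun i => f (s i)] by apply/ffunP => i; rewrite ffunE.
by exists s; rewrite ractE k'E f'E.
Qed.

Lemma rclass_pclass r : rvalid r -> rclass r = pclass (pblock_of r).
Proof.
move=> vr; apply/setP=> r'; rewrite !inE; apply/existsP/andP.
  by case=> s /eqP ->; rewrite rvalid_ract // pblock_of_ract.
by case=> vr' /eqP /(ract_transitive vr vr') [s ->]; exists s.
Qed.

Lemma rclass_self r : r \in rclass r.
Proof.
rewrite inE; apply/existsP; exists 1%g; case: r => m [k f].
have fE : [ffun i => f ((1%g : {perm 'I_m}) i)] = f by apply/ffunP => i; rewrite ffunE perm1.
by rewrite ractE /= invg1 perm1 fE.
Qed.

Lemma rep_of_seq (s : seq 'I_n) k : uniq s -> k < size s ->
  exists2 r, rvalid r & rseq r = s /\ rop r = k.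
Proof.
case: s => [//|x0 s'] s_uniq k_lt; set s := x0 :: s' in s_uniq k_lt *.
have m_lt : size s < n.+1.
  by rewrite ltnS -(card_uniqP s_uniq) (leq_trans (max_card _)) ?card_ord.
pose m := Ordinal m_lt.
pose r : rep n := Tagged (@repfam n) (Ordinal (k_lt : k < m), [ffun i : 'I_m => nth x0 s i]).
have rsE : rseq r = s.
  rewrite rseqE /codom /image_mem /= -[RHS](mkseq_nth x0) /mkseq -val_enum_ord -map_comp.
  by apply: eq_map => i; rewrite /= ffunE.
by exists r; rewrite /rvalid rsE.
Qed.

Lemma pclass_nonempty p : pointed_block p -> exists r, r \in pclass p.
Proof.
move=> p_pt; have x_idx : index p.2 (enum p.1) < size (enum p.1) by rewrite index_mem mem_enum.
have [r vr [rsE rkE]] := rep_of_seq (enum_uniq (mem p.1)) x_idx.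
have rptE : rpoint r = p.2.
  by rewrite -(nth_rseq r p.2) rsE rkE nth_index ?mem_enum.
have rsuppE : rsupp r = p.1 by apply/setP => y; rewrite inE rsE mem_enum.
by exists r; rewrite inE vr pblock_ofE rptE rsuppE -surjective_pairing eqxx.
Qed.

Lemma pclass_pblock_of r p : r \in pclass p -> pblock_of r = p.
Proof. by rewrite inE => /andP [_ /eqP]. Qed.

Lemma PblockP C : Pblock C <-> exists2 p, pointed_block p & C = pclass p.
Proof.
split=> [[r vr ->] | [p /pclass_nonempty [r r_p] ->]].
  by exists (pblock_of r); [apply: pblock_of_pointed | apply: rclass_pclass].
have vr : rvalid r by move: r_p; rewrite inE => /andP [].
by exists r; rewrite // rclass_pclass // (pclass_pblock_of r_p).
Qed.

Lemma pclass_inj p q : pointed_block p -> pclass p = pclass q -> p = q.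
Proof.
move=> /pclass_nonempty [r r_p] E; have r_q : r \in pclass q by rewrite -E.
by rewrite -(pclass_pblock_of r_p) (pclass_pblock_of r_q).
Qed.

Lemma csupp_pclass p : pointed_block p -> csupp (pclass p) = p.1.
Proof.
move=> /pclass_nonempty [r0 r0_p]; apply/setP => y.
apply/bigcupP/idP => [[r /pclass_pblock_of <- //] | y_p].
by exists r0; rewrite // -[rsupp r0]/((pblock_of r0).1) (pclass_pblock_of r0_p).
Qed.

Lemma phi_pointed X p : p \in phi X -> pointed_block p.
Proof. by case/imsetP=> r _ ->; apply: pblock_of_pointed. Qed.

Lemma pclass_phi X : (forall C, C \in X -> Pblock C) -> pclass @: phi X = X.
Proof.
move=> X_blocks; apply/setP => C; apply/imsetP/idP.
  case=> _ /imsetP [r /bigcupP [C' C'_X r_C'] ->] ->.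
  have [p _ C'E] := (PblockP C').1 (X_blocks C' C'_X).
  by rewrite (pclass_pblock_of (_ : r \in pclass p)) -?C'E.
move=> C_X; have [p p_pt CE] := (PblockP C).1 (X_blocks C C_X).
have [r r_p] := pclass_nonempty p_pt.
exists (pblock_of r); last by rewrite (pclass_pblock_of r_p).
by apply: imset_f; apply/bigcupP; exists C; rewrite // CE.
Qed.

Lemma phi_pclass P : (forall p, p \in P -> pointed_block p) -> phi (pclass @: P) = P.
Proof.
move=> P_pt; apply/setP => p; apply/imsetP/idP.
  by case=> r /bigcupP [_ /imsetP [q q_P ->] /pclass_pblock_of ->] ->.
move=> p_P; have [r r_p] := pclass_nonempty (P_pt p p_P).
exists r; last by rewrite (pclass_pblock_of r_p).
by apply/bigcupP; exists (pclass p); rewrite ?imset_f.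
Qed.

Lemma PermPartition_pclass P : (forall p, p \in P -> pointed_block p) ->
  PermPartition (pclass @: P) <-> pointed_partition P.
Proof.
move=> P_pt; have csuppE : [set csupp C | C in pclass @: P] = [set p.1 | p in P].
  by rewrite -imset_comp; apply: eq_in_imset => p /P_pt /csupp_pclass.
split=> [[_ P_part P_inj] | [P_part _ P_inj]].
  split; [by rewrite -csuppE | exact: P_pt | move=> p q p_P q_P pqE].
  apply: pclass_inj (P_pt p p_P) _.
  by apply: (P_inj _ _ (imset_f _ p_P) (imset_f _ q_P)); rewrite !csupp_pclass ?P_pt.
split; [ | by rewrite csuppE | ].
  by move=> _ /imsetP [p p_P ->]; apply/PblockP; exists p; rewrite ?P_pt.
move=> _ _ /imsetP [p p_P ->] /imsetP [q q_P ->].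
by rewrite !csupp_pclass ?P_pt // => /(P_inj _ _ p_P q_P) ->.
Qed.

Lemma pblock_of_seq qs : (forall q, q \in qs -> pointed_block q) ->
  exists2 rs, all (@rvalid n) rs & qs = [seq pblock_of r | r <- rs].
Proof.
elim: qs => [_ | q qs IH qs_pt]; first by exists [::].
have [r] := pclass_nonempty (qs_pt q (mem_head q qs)); rewrite inE => /andP [vr /eqP rE].
have [|rs v_rs ->] := IH; first by move=> q' q'_qs; apply: qs_pt; rewrite inE q'_qs orbT.
by exists (r :: rs); rewrite /= ?vr ?rE.
Qed.

Lemma size_rseq r : size (rseq r) = rsize r.
Proof. by rewrite size_map size_enum_ord. Qed.

Lemma size_flatten_rseq rs :
  size (flatten [seq rseq r | r <- rs]) = sumn [seq rsize r | r <- rs].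
Proof. by elim: rs => //= r rs IH; rewrite size_cat size_rseq IH. Qed.

Lemma uniq_flatten_rseq rs : all (@rvalid n) rs ->
  pairwise (fun r r' => [disjoint rsupp r & rsupp r']) rs ->
  uniq (flatten [seq rseq r | r <- rs]).
Proof.
elim: rs => //= r rs IH /andP [vr v_rs] /andP [r_disj rs_disj].
rewrite cat_uniq -[uniq (rseq r)]/(rvalid r) vr IH // andbT.
apply/hasPn => y /flatten_mapP [r' r'_rs y_r'].
have := disjointFl (allP r_disj r' r'_rs) (_ : y \in rsupp r'); rewrite !inE.
by move=> ->.
Qed.

Lemma composite_rsupp k rs r : composite k rs r -> rsupp r = \bigcup_(r' <- rs) rsupp r'.
Proof.
case=> _ [rsE _]; apply/setP => y; rewrite inE rsE bigcup_seq.
by apply/flatten_mapP/bigcupP => [] [r' r'_rs y_r']; exists r'; rewrite ?inE in y_r' *.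
Qed.

Lemma composite_rpoint k rs r : composite k rs r -> rpoint r = rpoint (nth r rs k).
Proof.
case=> _ [rsE [rk [rest [dropE opE]]]].
have -> : nth r rs k = rk by rewrite -[k]addn0 -nth_drop dropE.
rewrite -(nth_rseq r (rpoint r)) rsE opE -(nth_rseq rk (rpoint r)).
rewrite -{1}(cat_take_drop k rs) dropE map_cat flatten_cat /=.
by rewrite nth_cat size_flatten_rseq ltnNge leq_addr addKn nth_cat size_rseq ltn_ord.
Qed.

Lemma composite_exists k rs : uniq (flatten [seq rseq r | r <- rs]) -> k < size rs ->
  exists2 r, rvalid r & composite k rs r.
Proof.
case: rs => [//|r0 rs'] rs_uniq k_lt; set rs := r0 :: rs' in rs_uniq k_lt *.
set rk := nth r0 rs k; have dropE := drop_nth r0 k_lt.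
pose K := sumn [seq rsize r | r <- take k rs] + rop rk.
have K_lt : K < size (flatten [seq rseq r | r <- rs]).
  rewrite -{1}(cat_take_drop k rs) dropE map_cat flatten_cat size_cat /=.
  by rewrite size_cat size_flatten_rseq ltn_add2l size_rseq ltn_addr ?ltn_ord.
have [r vr [rsE opE]] := rep_of_seq rs_uniq K_lt.
by exists r => //; split; [ | split; [ | exists rk, (drop k.+1 rs)]].
Qed.

Lemma is_tmu_rpoint k cs p : is_tmu k cs (pclass p) ->
  exists C r, [/\ C \in cs, r \in C & rpoint r = p.2].
Proof.
case=> rs [size_rs rs_cs [r r_comp pE]]; have k_lt : k < size rs by case: r_comp.
exists (nth set0 cs k), (nth r rs k); split.
- by rewrite mem_nth // -size_rs.
- exact: all2_nth rs_cs k_lt.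
have : r \in pclass p by rewrite pE rclass_self.
by move/pclass_pblock_of <-; rewrite -(composite_rpoint r_comp).
Qed.

Lemma is_tmu_pclass k qs p : (forall q, q \in qs -> pointed_block q) ->
  pairwise (fun q q' => [disjoint q.1 & q'.1]) qs -> k < size qs ->
  p.1 = \bigcup_(q <- qs) q.1 -> p.2 = (nth p qs k).2 ->
  is_tmu k [seq pclass q | q <- qs] (pclass p).
Proof.
move=> /pblock_of_seq [rs v_rs ->]; rewrite pairwise_map size_map => rs_disj k_lt p1E p2E.
have [r vr r_comp] := composite_exists (uniq_flatten_rseq v_rs rs_disj) k_lt.
exists rs; split; first by rewrite !size_map.
  elim: rs v_rs {rs_disj k_lt p1E p2E r_comp} => //= r' rs IH /andP [vr' /IH ->].
  by rewrite inE vr' eqxx.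
exists r => //; rewrite rclass_pclass // pblock_ofE (composite_rsupp r_comp).
by rewrite (composite_rpoint r_comp) [p]surjective_pairing p1E p2E big_map (nth_map r).
Qed.

Lemma pointed_partition_cover P x : pointed_partition P -> exists2 p, p \in P & x \in p.1.
Proof.
case=> /and3P [/eqP P_cover _ _] _ _.
have : x \in cover [set p.1 | p in P] by rewrite P_cover inE.
by rewrite cover_imset => /bigcupP [p p_P x_p]; exists p.
Qed.

Lemma pointed_partition_disjoint P p q : pointed_partition P ->
  p \in P -> q \in P -> p != q -> [disjoint p.1 & q.1].
Proof.
case=> /and3P [_ /trivIsetP P_triv _] _ P_inj p_P q_P pq.
apply: P_triv; rewrite ?imset_f //; apply: contra pq => /eqP pqE.
by rewrite (P_inj _ _ p_P q_P pqE).
Qed.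

Lemma pointed_partition_eq P p q x : pointed_partition P ->
  p \in P -> q \in P -> x \in p.1 -> x \in q.1 -> p = q.
Proof.
move=> P_part p_P q_P x_p x_q; apply/eqP; apply: contraTT x_q => pq.
by rewrite (disjointFr (pointed_partition_disjoint P_part p_P q_P pq) x_p).
Qed.

Lemma pointed_le_of_PermLe P Q : pointed_partition P -> pointed_partition Q ->
  PermLe (pclass @: P) (pclass @: Q) -> pointed_le P Q.
Proof.
move=> P_part Q_part PQ_le; have [_ P_pt _] := P_part; have [_ Q_pt _] := Q_part.
split=> [q q_Q | ].
  have [p p_P q2_p] := pointed_partition_cover q.2 P_part.
  have [cs [k [_ cs_Q p1E _]]] := PQ_le _ (imset_f pclass p_P).
  rewrite -(csupp_pclass (P_pt p p_P)) p1E bigcup_seq in q2_p.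
  have [C C_cs q2_C] := bigcupP q2_p; have [q' q'_Q CE] := imsetP (cs_Q C C_cs).
  rewrite CE (csupp_pclass (Q_pt q' q'_Q)) in q2_C.
  have q'E : q' = q by apply: pointed_partition_eq Q_part q'_Q q_Q q2_C (Q_pt q q_Q).
  exists p => //; rewrite -(csupp_pclass (P_pt p p_P)) p1E bigcup_seq.
  by apply: (bigcup_max C) => //; rewrite CE (csupp_pclass (Q_pt q' q'_Q)) q'E.
apply/subsetP => _ /imsetP [p p_P ->].
have [cs [k [_ cs_Q _ p_tmu]]] := PQ_le _ (imset_f pclass p_P).
have [C [r [C_cs r_C r_pt]]] := is_tmu_rpoint p_tmu.
have [q q_Q CE] := imsetP (cs_Q C C_cs).
rewrite CE in r_C; apply/imsetP; exists q => //.
by rewrite -r_pt -(pclass_pblock_of r_C).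
Qed.

Lemma PermLe_of_pointed_le P Q : pointed_partition P -> pointed_partition Q ->
  pointed_le P Q -> PermLe (pclass @: P) (pclass @: Q).
Proof.
move=> P_part Q_part [PQ_refine /subsetP PQ_points].
have [_ P_pt _] := P_part; have [_ Q_pt _] := Q_part.
move=> _ /imsetP [p p_P ->].
have [q0 q0_Q q0E] := imsetP (PQ_points _ (imset_f snd p_P)).
have Q_inside q x : q \in Q -> x \in q.1 -> x \in p.1 -> q.1 \subset p.1.
  move=> q_Q x_q x_p; have [p' p'_P q_p'] := PQ_refine q q_Q.
  by rewrite -(pointed_partition_eq P_part p'_P p_P (subsetP q_p' x x_q) x_p).
pose qs := enum [set q in Q | q.1 \subset p.1].
have qs_Q q : q \in qs -> q \in Q by rewrite mem_enum inE => /andP [].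
have q0_qs : q0 \in qs.
  by rewrite mem_enum inE q0_Q (Q_inside q0 q0.2) ?Q_pt // -q0E P_pt.
have p1E : p.1 = \bigcup_(q <- qs) q.1.
  apply/setP => x; rewrite bigcup_seq; apply/idP/bigcupP => [x_p | [q]].
    have [q q_Q x_q] := pointed_partition_cover x Q_part.
    by exists q; rewrite // mem_enum inE q_Q (Q_inside q x).
  by rewrite mem_enum inE => /andP [_ /subsetP]; apply.
have qs_disj : pairwise (fun q q' => [disjoint q.1 & q'.1]) qs.
  apply: (@sub_in_pairwise _ (mem Q) [rel q q' | q != q']).
  - by move=> q q' q_Q q'_Q /= /(pointed_partition_disjoint Q_part q_Q q'_Q).
  - by apply/allP => q /qs_Q.
  by rewrite -uniq_pairwise enum_uniq.
exists [seq pclass q | q <- qs], (index q0 qs); split.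
- rewrite map_inj_in_uniq ?enum_uniq // => q q' q_qs _.
  exact: pclass_inj (Q_pt q (qs_Q q q_qs)).
- by move=> _ /mapP [q q_qs ->]; rewrite imset_f ?qs_Q.
- rewrite (csupp_pclass (P_pt p p_P)) p1E big_map; apply: eq_big_seq => q /qs_Q q_Q.
  by rewrite (csupp_pclass (Q_pt q q_Q)).
apply: is_tmu_pclass => //; first by move=> q /qs_Q /Q_pt.
  by rewrite index_mem.
by rewrite nth_index.
Qed.

End PermPartition.

Arguments pclass {n}.

Theorem mainTheorem4 (n : nat) : 0 < n ->
  [/\ (forall X : {set {set rep n}}, PermPartition X -> pointed_partition (phi X)),
      (forall P, pointed_partition P ->
         exists2 X : {set {set rep n}}, PermPartition X & phi X = P),
      (forall X Y : {set {set rep n}}, PermPartition X -> PermPartition Y ->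
         phi X = phi Y -> X = Y) &
      (forall X Y : {set {set rep n}}, PermPartition X -> PermPartition Y ->
         (PermLe X Y <-> pointed_le (phi X) (phi Y)))].
Proof.
(* The isomorphism holds for n = 0 as well. *)
move=> _.
have phiK (X : {set {set rep n}}) : PermPartition X -> pclass @: phi X = X.
  by case=> X_blocks _ _; apply: pclass_phi.
have phi_part (X : {set {set rep n}}) : PermPartition X -> pointed_partition (phi X).
  by move=> X_part; apply/(PermPartition_pclass (@phi_pointed _ X)); rewrite phiK.
split.
- exact: phi_part.
- move=> P P_part; have [_ P_pt _] := P_part.
  by exists (pclass @: P); [apply/(PermPartition_pclass P_pt) | apply: phi_pclass].
- by move=> X Y /phiK {2}<- /phiK {2}<- ->.
move=> X Y X_part Y_part; rewrite -{1}(phiK X X_part) -{1}(phiK Y Y_part).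
split; [apply: pointed_le_of_PermLe | apply: PermLe_of_pointed_le]; exact: phi_part.
Qed.
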